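(* Let $k\ge1$ and let $f:\mathbb{N}^k\to\mathbb{N}$ be minimal. Let $B\subseteq\mathbb{N}$ satisfy $\bar d(B)=0$ and $\bar d(f[B^k])>0$. Then for each $i\ge0$ the set $B\setminus[0,i]$ also satisfies $\bar d(B\setminus[0,i])=0$ and $\bar d(f[(B\setminus[0,i])^k])>0$; in fact $\bar d(f[(B\setminus[0,i])^k])=\bar d(f[B^k])$.
   Context: $\mathbb{N}=\{0,1,2,\dots\}$. For $A\subseteq\mathbb{N}$, $\bar d(A)=\limsup_{n\to\infty}\frac{|A\cap[0,n)|}{n}$. $\mathscr{C}_{I_{\bar d=0}}$ is the set of all finitary functions $f:\mathbb{N}^k\to\mathbb{N}$ ($k\ge1$) such that $\bar d(f[A^k])=0$ whenever $\bar d(A)=0$. For $f:\mathbb{N}^k\to\mathbb{N}$, a permutation $\pi$ of $\{1,\dots,k\}$ and a tuple $\bar a=(a_1,\dots,a_\ell)\in\mathbb{N}^\ell$ with $0\le\ell<k$, the shadow $f_{\pi,\bar a}$ is the $(k-\ell)$-ary function $f_{\pi,\bar a}(y_1,\dots,y_{k-\ell})=f_\pi(a_1,\dots,a_\ell,y_1,\dots,y_{k-\ell})$, where $f_\pi(x_1,\dots,x_k)=f(x_{\pi(1)},\dots,x_{\pi(k)})$. The shadow is proper if $\ell>0$. $f$ is called minimal if $f\notin\mathscr{C}_{I_{\bar d=0}}$ and every proper shadow of $f$ lies in $\mathscr{C}_{I_{\bar d=0}}$. *)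

From HB Require Import structures.
From mathcomp Require Import all_boot all_order all_algebra all_fingroup.
From mathcomp Require Import all_classical all_reals all_analysis.
From mathcomp Require Import Rstruct.
Set Implicit Arguments. Unset Strict Implicit. Unset Printing Implicit Defensive.
Import Order.TTheory GRing.Theory Num.Theory.
Local Open Scope classical_set_scope.
Local Open Scope ring_scope.

Definition cnt (A : set nat) (n : nat) : nat :=
  (\sum_(0 <= i < n) (if `[< A i >] then 1 else 0))%N.

Definition udens (A : set nat) : \bar Rdefinitions.R :=
  limn_esup (fun n : nat => ((cnt A n)%:R / n%:R : Rdefinitions.R)%:E).

Definition img (k : nat) (f : ('I_k -> nat) -> nat) (A : set nat) : set nat :=
  [set m | exists x : 'I_k -> nat, (forall i, A (x i)) /\ f x = m].

Definition inC (k : nat) (f : ('I_k -> nat) -> nat) : Prop :=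
  forall A : set nat, udens A = 0%E -> udens (img f A) = 0%E.

(* extend a finite tuple to nat-indexed (value 0 outside range; never used) *)
Definition ext (n : nat) (v : 'I_n -> nat) (j : nat) : nat :=
  if insub j is Some i then v (i : 'I_n) else 0%N.

(* f_pi(x_1..x_k) = f(x_{pi 1},...,x_{pi k});
   shadow f_{pi,a}(y_1..y_{k-l}) = f_pi(a_1..a_l, y_1..y_{k-l}) *)
Definition shadow (k l : nat) (f : ('I_k -> nat) -> nat) (pi : 'S_k)
  (a : 'I_l -> nat) : ('I_(k - l) -> nat) -> nat :=
  fun y => f (fun i : 'I_k =>
    let j := nat_of_ord (pi i) in
    if (j < l)%N then ext a j else ext y (j - l)).

Definition minimal (k : nat) (f : ('I_k -> nat) -> nat) : Prop :=
  ~ inC f /\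
  forall (l : nat), (0 < l)%N -> (l < k)%N ->
    forall (pi : 'S_k) (a : 'I_l -> nat), inC (shadow f pi a).

Definition dropupto (B : set nat) (i : nat) : set nat := [set n | B n /\ (i < n)%N].

(* If b <= i, then any value f(x) with x in B^k and some coordinate x_t = b
   is a value of the proper shadow obtained by freezing coordinate t at b, on
   B^(k-1).  By minimality these finitely many shadows (b <= i, t < k) map B,
   a density-zero set, onto density-zero sets, so f[B^k] and
   f[(B \ [0,i])^k] differ by a set of upper density zero.  For k = 1 the
   difference is even finite. *)

From HB Require Import structures.
From mathcomp Require Import all_boot all_order all_algebra all_fingroup.
From mathcomp Require Import all_classical all_reals all_analysis.
From mathcomp Require Import Rstruct zify.
Set Implicit Arguments. Unset Strict Implicit. Unset Printing Implicit Defensive.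
Import Order.TTheory GRing.Theory Num.Theory.
Local Open Scope classical_set_scope.
Local Open Scope ring_scope.

Local Notation R := Rdefinitions.R.

Section LimnEsup.
Variable T : realType.
Implicit Types u v : (\bar T)^nat.

Lemma le_esups u v : (forall n, (u n <= v n)%E) ->
  forall n, (esups u n <= esups v n)%E.
Proof.
move=> uv n; apply: ge_ereal_sup => _ [m /= nm <-].
by apply: le_trans (uv m) _; apply: ereal_sup_ubound; exists m.
Qed.

Lemma esups_ge0 u : (forall n, (0 <= u n)%E) -> forall n, (0 <= esups u n)%E.
Proof.
by move=> u0 n; apply: le_trans (u0 n) _; apply: ereal_sup_ubound; exists n => /=.
Qed.

Lemma le_limn_esup u v : (forall n, (u n <= v n)%E) ->
  (limn_esup u <= limn_esup v)%E.
Proof.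
move=> uv; rewrite !limn_esup_lim; apply: lee_lim; try exact: is_cvg_esups.
by apply: nearW; apply: le_esups.
Qed.

Lemma limn_esup_ge0 u : (forall n, (0 <= u n)%E) -> (0 <= limn_esup u)%E.
Proof.
move=> u0; rewrite limn_esup_lim; apply: lime_ge; first exact: is_cvg_esups.
by apply: nearW; apply: esups_ge0.
Qed.

Lemma le_limn_esupD u v : (forall n, (0 <= u n)%E) -> (forall n, (0 <= v n)%E) ->
  (limn_esup (fun n => u n + v n) <= limn_esup u + limn_esup v)%E.
Proof.
move=> u0 v0; have := limn_esup_ge0 u0; have := limn_esup_ge0 v0.
rewrite !limn_esup_lim => lv lu.
have uv_def : (limn (esups u) +? limn (esups v))%E by rewrite ge0_adde_def ?inE.
have cu := @is_cvg_esups _ u; have cv := @is_cvg_esups _ v.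
rewrite -limeD //; apply: lee_lim; [exact: is_cvg_esups | exact: is_cvgeD | ].
apply: nearW => n /=; apply: ge_ereal_sup => _ [m /= nm <-].
by apply: leeD; apply: ereal_sup_ubound; exists m.
Qed.

End LimnEsup.

Lemma cnt_subset (A C : set nat) n : A `<=` C -> (cnt A n <= cnt C n)%N.
Proof.
move=> AC; apply: leq_sum => j _.
by case: (asboolP (A j)) => // /AC Cj; rewrite asboolT.
Qed.

Lemma cnt_setU (A C : set nat) n : (cnt (A `|` C) n <= cnt A n + cnt C n)%N.
Proof.
rewrite /cnt -big_split /=; apply: leq_sum => j _.
case: (asboolP ((A `|` C) j)) => //= -[Aj|Cj]; first by rewrite asboolT.
by rewrite (asboolT Cj) addn1.
Qed.

Lemma cnt_set1 (v n : nat) : cnt [set v] n = (v < n)%N.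
Proof.
elim: n => [|n IH]; first by rewrite /cnt big_geq.
rewrite /cnt big_nat_recr //= -/(cnt _ _) IH ltnS [in RHS]leq_eqVlt.
by case: (asboolP (n = v)) => [->|/eqP]; rewrite ?ltnn ?eqxx // addn0 eq_sym => /negbTE->.
Qed.

Lemma ler_ratio (a b n : nat) : (a <= b)%N -> a%:R / n%:R <= b%:R / n%:R :> R.
Proof. by move=> ab; rewrite ler_wpM2r ?invr_ge0 ?ler0n ?ler_nat. Qed.

Lemma ratio_ge0 (a n : nat) : 0 <= a%:R / n%:R :> R.
Proof. by rewrite divr_ge0 ?ler0n. Qed.

Lemma udens_ge0 (A : set nat) : (0 <= udens A)%E.
Proof. by apply: limn_esup_ge0 => n; rewrite lee_fin ratio_ge0. Qed.

Lemma le_udens (A C : set nat) : A `<=` C -> (udens A <= udens C)%E.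
Proof.
by move=> AC; apply: le_limn_esup => n; rewrite lee_fin ler_ratio ?cnt_subset.
Qed.

Lemma le_udensU (A C : set nat) : (udens (A `|` C) <= udens A + udens C)%E.
Proof.
have ratio_ge0E (D : set nat) n : (0 <= ((cnt D n)%:R / n%:R : R)%:E)%E.
  by rewrite lee_fin ratio_ge0.
apply: le_trans (le_limn_esupD (ratio_ge0E A) (ratio_ge0E C)).
apply: le_limn_esup => n /=; rewrite -EFinD lee_fin -mulrDl -natrD.
exact/ler_ratio/cnt_setU.
Qed.

Lemma udens_subset0 (A C : set nat) : A `<=` C -> udens C = 0%E -> udens A = 0%E.
Proof. by move=> AC C0; apply: le_anti; rewrite udens_ge0 -C0 le_udens. Qed.

Lemma udensU0 (A C : set nat) : udens A = 0%E -> udens C = 0%E ->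
  udens (A `|` C) = 0%E.
Proof.
by move=> A0 C0; apply: le_anti; rewrite udens_ge0 andbT -(adde0 0%E) -{1}A0 -C0 le_udensU.
Qed.

(* [c / n <= 2c / (n + 1)] compares the counting ratio with [harmonic]. *)
Lemma udens_cnt_bounded (A : set nat) (c : nat) :
  (forall n, (cnt A n <= c)%N) -> udens A = 0%E.
Proof.
move=> Ac; apply: le_anti; rewrite udens_ge0 andbT.
pose v n : \bar R := ((2 * c)%:R%:E * (harmonic n)%:E)%E.
have cv : v @ \oo --> ((2 * c)%:R%:E * 0%:E)%E by apply/cvgeZl/cvge_harmonic.
rewrite -(mule0 (2 * c)%:R%:E) -(cvg_limn_einf_sup cv).2.
apply: le_limn_esup => n; rewrite /v -EFinM lee_fin.
apply: le_trans (ler_ratio n (Ac n)) _.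
case: n => [|m]; first by rewrite invr0 mulr0 mulr_ge0 ?ler0n //= invr_ge0 ler0n.
rewrite /= natrM ler_pdivrMr ?ltr0n // mulrAC ler_pdivlMr ?ltr0n // -!natrM ler_nat.
nia.
Qed.

Lemma udens_set1 (v : nat) : udens [set v] = 0%E.
Proof. by apply: (@udens_cnt_bounded _ 1) => n; rewrite cnt_set1 leq_b1. Qed.

Lemma udens_bigcup_ord (n : nat) (S : nat -> set nat) :
  (forall j, (j < n)%N -> udens (S j) = 0%E) -> udens (\bigcup_(j < n) S j) = 0%E.
Proof.
move=> S0; rewrite bigcup_mkord.
apply: (big_ind (fun A => udens A = 0%E)) => [|A C|j _]; last exact: S0.
- exact: udens_subset0 (sub0set [set 0%N]) (udens_set1 0).
- exact: udensU0.
Qed.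

Lemma ext_lt (n : nat) (v : 'I_n -> nat) (j : nat) (jn : (j < n)%N) :
  ext v j = v (Ordinal jn).
Proof. by rewrite /ext insubT. Qed.

(* The transposition [(0 t)] brings coordinate [t] to the front, where the
   shadow holds the constant; the shadow's argument [q] sits at [q + 1]. *)
Lemma shadow_tperm0 (k : nat) (f : ('I_k.+1 -> nat) -> nat) (x : 'I_k.+1 -> nat)
    (t : 'I_k.+1) :
  f x = shadow f (tperm ord0 t) (fun _ : 'I_1 => x t)
                 (fun q : 'I_(k.+1 - 1) => x (tperm ord0 t (inord q.+1))).
Proof.
rewrite /shadow; congr f; apply: funext => u /=; set pi := tperm ord0 t.
case: ltnP => [pu0|pu_gt0].
  have pu : pi u = ord0 by apply: val_inj; move: pu0; rewrite ltnS leqn0 => /eqP.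
  by rewrite (ext_lt _ pu0) -[in LHS](tpermK ord0 t u) -/pi pu tpermL.
have pu_lt : (pi u - 1 < k.+1 - 1)%N by rewrite ltn_sub2rE.
by rewrite (ext_lt _ pu_lt) /= subn1 prednK // inord_val tpermK.
Qed.

Lemma img_nullary (g : ('I_0 -> nat) -> nat) (A : set nat) :
  img g A `<=` [set g (fun _ => 0%N)].
Proof. by move=> _ [x [_ <-]]; congr g; apply: funext => -[]. Qed.

Lemma udens_img_shadow1 (k : nat) (f : ('I_k.+1 -> nat) -> nat) (B : set nat)
    (pi : 'S_k.+1) (a : 'I_1 -> nat) :
  minimal f -> udens B = 0%E -> udens (img (shadow f pi a) B) = 0%E.
Proof.
case: k f pi => [|k] f pi [_ shadowC] B0; last exact: shadowC.
exact: udens_subset0 (@img_nullary (shadow f pi a) B) (udens_set1 _).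
Qed.

Definition img_below (k : nat) (f : ('I_k -> nat) -> nat) (B : set nat) (i : nat) :=
  [set f x | x in [set x | (forall t, B (x t)) /\ exists t, (x t <= i)%N]].

Lemma udens_img_below (k : nat) (f : ('I_k -> nat) -> nat) (B : set nat) (i : nat) :
  minimal f -> udens B = 0%E -> udens (img_below f B i) = 0%E.
Proof.
case: k f => [|k] f fmin B0.
  have below0 : img_below f B i `<=` [set 0%N] by move=> m [x [_ [[]]]].
  exact: udens_subset0 below0 (udens_set1 0).
pose shadows (a : nat) :=
  \bigcup_(j < k.+1) img (shadow f (tperm ord0 (inord j)) (fun _ : 'I_1 => a)) B.
apply: (@udens_subset0 _ (\bigcup_(a < i.+1) shadows a)).
  move=> _ [x [xB [t xt]] <-]; exists (x t) => //; exists (val t) => /=.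
    exact: ltn_ord.
  rewrite inord_val; exists (fun q => x (tperm ord0 t (inord q.+1))).
  by split=> [q|]; [exact: xB | rewrite -shadow_tperm0].
apply: udens_bigcup_ord => a _; apply: udens_bigcup_ord => j _.
exact: udens_img_shadow1.
Qed.

Lemma img_dropupto_cover (k : nat) (f : ('I_k -> nat) -> nat) (B : set nat) (i : nat) :
  img f B `<=` img f (dropupto B i) `|` img_below f B i.
Proof.
move=> _ [x [xB <-]]; have [/forallP x_gt|] := boolP [forall t, (i < x t)%N].
  by left; exists x; split=> // t; split.
rewrite negb_forall => /existsP [t]; rewrite -leqNgt => xt.
by right; exists x => //; split=> //; exists t.
Qed.

Lemma udens_eq_setU0 (A C Z : set nat) :
  C `<=` A -> A `<=` C `|` Z -> udens Z = 0%E -> udens C = udens A.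
Proof.
move=> CA ACZ Z0; apply: le_anti; rewrite le_udens //=.
by rewrite -[udens C]adde0 -Z0 (le_trans (le_udens ACZ)) ?le_udensU.
Qed.

Theorem mainTheorem4 (k : nat) (f : ('I_k -> nat) -> nat) (B : set nat) :
  (1 <= k)%N -> minimal f ->
  udens B = 0%E -> (0 < udens (img f B))%E ->
  forall i : nat,
    udens (dropupto B i) = 0%E /\
    (0 < udens (img f (dropupto B i)))%E /\
    udens (img f (dropupto B i)) = udens (img f B).
Proof.
move=> _ fmin B0 fB_pos i.
have dropB : dropupto B i `<=` B by move=> m [].
have img_eq : udens (img f (dropupto B i)) = udens (img f B).
  apply: udens_eq_setU0 _ (@img_dropupto_cover _ f B i) (udens_img_below i fmin B0).
  by move=> _ [x [xB <-]]; exists x; split=> // t; apply/dropB.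
by split; [exact: udens_subset0 dropB B0 | rewrite img_eq].
Qed.
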